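(* Let $f:\{0,1\}^r\to\{0,1\}$ satisfy $f(0,\dots,0)=1$, and suppose $f$ does not contain $\mathrm{IMPL}$ as a $0$-restriction. If $S\subseteq T\subseteq[r]$ and $f(a_S)=f(a_T)=1$, then $f(a_{T\setminus S})=1$.
   Context: For $S\subseteq[r]$, $a_S\in\{0,1\}^r$ is the vector with ones exactly at the positions in $S$. $f$ contains $g:\{0,1\}^s\to\{0,1\}$ as a $0$-restriction if there are pairwise disjoint, possibly empty, sets $X_1,\dots,X_s,Z_0$ with union $[r]$ such that $g(x_1,\dots,x_s)=f(u)$, where $u_i=x_j$ for $i\in X_j$ and $u_i=0$ for $i\in Z_0$. $\mathrm{IMPL}(y_1,y_2)=\overline{y_1}\vee y_2$. *)

From mathcomp Require Import all_boot.
Set Implicit Arguments. Unset Strict Implicit. Unset Printing Implicit Defensive.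

Definition boolfun (r : nat) := {ffun 'I_r -> bool} -> bool.

Definition indvec (r : nat) (S : {set 'I_r}) : {ffun 'I_r -> bool} :=
  [ffun i => i \in S].

Definition zero_restriction (r s : nat) (f : boolfun r) (g : boolfun s) : Prop :=
  exists (X : 'I_s -> {set 'I_r}) (Z0 : {set 'I_r}),
    (forall j k : 'I_s, j != k -> [disjoint X j & X k]) /\
    (forall j : 'I_s, [disjoint X j & Z0]) /\
    (\bigcup_(j < s) X j) :|: Z0 = setT /\
    forall x : {ffun 'I_s -> bool},
      g x = f [ffun i => [exists j : 'I_s, (i \in X j) && x j]].

Definition IMPL : boolfun 2 :=
  fun y => ~~ y ord0 || y (Ordinal (isT : 1 < 2)).

(* Suppose f(a_(T\S)) = 0. Send the first variable to the block T \ S, the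
   second to the block S, and fix the coordinates outside T to 0.  The
   restricted function g has g(0,0) = f(a_0) = 1, g(0,1) = f(a_S) = 1,
   g(1,1) = f(a_T) = 1 and g(1,0) = f(a_(T\S)) = 0, i.e. g = IMPL. *)

From mathcomp Require Import all_boot.

Set Implicit Arguments.
Unset Strict Implicit.
Unset Printing Implicit Defensive.

Section ZeroRestriction.

Variables (r s : nat).
Implicit Types (f : boolfun r) (g : boolfun s) (X : 'I_s -> {set 'I_r}).

Lemma zero_restriction_inputE X (x : {ffun 'I_s -> bool}) :
  [ffun i => [exists j, (i \in X j) && x j]] = indvec (\bigcup_(j | x j) X j).
Proof.
apply/ffunP => i; rewrite !ffunE.
by apply/existsP/bigcupP => [[j /andP[iXj xj]]|[j xj iXj]]; exists j; rewrite ?iXj.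
Qed.

Lemma zero_restriction_of_blocks f g X :
  (forall j k, j != k -> [disjoint X j & X k]) ->
  (forall x, g x = f (indvec (\bigcup_(j | x j) X j))) ->
  zero_restriction f g.
Proof.
move=> disjX gE; exists X, (~: \bigcup_j X j); split=> //; split.
- move=> j; rewrite disjoints_subset setCK.
  exact: (bigcup_sup j).
split; first by rewrite setUCr.
by move=> x; rewrite zero_restriction_inputE.
Qed.

End ZeroRestriction.

Lemma zero_restriction_of_two_blocks r (f : boolfun r) (g : boolfun 2)
    (A B : {set 'I_r}) :
  [disjoint A & B] ->
  (forall x, g x = f (indvec ((if x ord0 then A else set0)
                              :|: (if x ord_max then B else set0)))) ->
  zero_restriction f g.
Proof.
pose X (j : 'I_2) := if j == ord0 then A else B.
move=> disjAB gE; apply: (zero_restriction_of_blocks (X := X)).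
- by case=> [[|[|?]] ?] // [[|[|?]] ?] //= _; rewrite // disjoint_sym.
move=> x; rewrite gE big_mkcond !big_ord_recl big_ord0 /= setU0.
by congr (f (indvec (_ :|: _))); congr (if x _ then _ else _); apply: val_inj.
Qed.

Theorem mainTheorem15 (r : nat) (f : {ffun 'I_r -> bool} -> bool) :
  f (indvec (set0 : {set 'I_r})) = true ->
  ~ zero_restriction f IMPL ->
  forall S T : {set 'I_r}, S \subset T ->
    f (indvec S) = true -> f (indvec T) = true ->
    f (indvec (T :\: S)) = true.
Proof.
move=> f0 noIMPL S T sST fS fT; apply/negbNE/negP => fD; apply: noIMPL.
apply: (zero_restriction_of_two_blocks (A := T :\: S) (B := S)).
  by rewrite disjoints_subset setDE subsetIr.
have max2E : Ordinal (isT : 1 < 2) = ord_max by apply: val_inj.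
move=> x; rewrite /IMPL max2E.
case: (x ord0); case: (x ord_max); rewrite /= ?setU0 ?set0U //.
- by rewrite setUC setDE setUIr setUCr setIT (setUidPr sST).
- exact/esym/negbTE.
Qed.
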